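(* Let $n\geq 3$ be odd, $m>1$ be odd, and let $G$ be a non-regular bipartite graph of order $m$ with a bipartition $\{A,B\}$ such that all vertices of $A$ have the same degree and all vertices of $B$ have the same degree. Then $\chi_{ld}(G[\overline{K_{n}}])=2$.
   Context: All graphs are finite, simple and undirected, without isolated vertices. For a graph $G=(V,E)$ of order $N$ without isolated vertices, a bijection $f\colon V\to\{1,2,\dots,N\}$ is a local distance antimagic labeling if $w(u)\neq w(v)$ for every edge $uv$, where $w(u)=\sum_{x\in N(u)}f(x)$ and $N(u)$ is the open neighborhood of $u$. $\chi_{ld}(G)$ is the minimum number of distinct weights over all local distance antimagic labelings of $G$. $\overline{K_n}$ is the edgeless graph on $n$ vertices. The lexicographic product $G[H]$ has vertex set $V(G)\times V(H)$, with $(g,h)$ adjacent to $(g',h')$ iff $gg'\in E(G)$, or $g=g'$ and $hh'\in E(H)$. *)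

From mathcomp Require Import all_boot.
Set Implicit Arguments. Unset Strict Implicit. Unset Printing Implicit Defensive.

Definition simple_graph (V : finType) (e : rel V) : Prop :=
  (forall x y, e x y = e y x) /\ (forall x, ~~ e x x).

Definition deg (V : finType) (e : rel V) (x : V) : nat := #|[set y | e x y]|.

Definition no_isolated (V : finType) (e : rel V) : Prop :=
  forall x, 0 < deg e x.

Definition weight (V : finType) (e : rel V) (f : V -> nat) (u : V) : nat :=
  \sum_(x | e u x) f x.

Definition bij_label (V : finType) (f : V -> nat) : Prop :=
  injective f /\ (forall v, 1 <= f v <= #|V|).

Definition ld_antimagic (V : finType) (e : rel V) (f : V -> nat) : Prop :=
  bij_label f /\ (forall u v, e u v -> weight e f u != weight e f v).

Definition num_weights (V : finType) (e : rel V) (f : V -> nat) : nat :=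
  size (undup [seq weight e f v | v <- enum V]).

Definition chi_ld_eq (V : finType) (e : rel V) (k : nat) : Prop :=
  (exists f, ld_antimagic e f /\ num_weights e f = k) /\
  (forall f, ld_antimagic e f -> k <= num_weights e f).

Definition lex_prod (V W : finType) (e : rel V) (h : rel W) : rel (V * W) :=
  fun p q => e p.1 q.1 || ((p.1 == q.1) && h p.2 q.2).

Definition edgeless (n : nat) : rel 'I_n := fun _ _ => false.

From mathcomp Require Import all_boot.
From mathcomp Require Import zify.

Set Implicit Arguments.
Unset Strict Implicit.
Unset Printing Implicit Defensive.

(* Label the copy (v, j) of v by j m + p_j (rank v) + 1, where p_0, ..., p_(n-1)
   are permutations of {0, ..., m - 1} whose sum over j does not depend on the
   rank: for m = 2h + 1 the first three form the classical 3 x m magic rectangle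
   (r, r + h, -2r - 1 mod m) and the remaining n - 3 are paired as r, m - 1 - r.
   Then every vertex of the fibre over v has weight deg v * C for a constant C,
   and in a bipartite graph with constant degree on each side which is not
   regular, every degree is one of two values and adjacent degrees differ. *)

Section MagicRectangle.

Variable h : nat.
Local Notation m := h.*2.+1.

Definition rot_half (r : nat) : nat := if r <= h then h + r else r - h - 1.

Definition neg_double (r : nat) : nat :=
  if r <= h then h.*2 - r.*2 else 4 * h + 1 - r.*2.

Definition magic_entry (j r : nat) : nat :=
  match j with
  | 0 => r
  | 1 => rot_half r
  | 2 => neg_double r
  | _.+3 => if odd j then r else h.*2 - r
  end.

Lemma magic_entry_lt j r : r < m -> magic_entry j r < m.
Proof.
rewrite /magic_entry /rot_half /neg_double.
by case: j => [|[|[|j]]] /=; try case: ifP; lia.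
Qed.

Lemma magic_entry_inj j r r' : r < m -> r' < m ->
  magic_entry j r = magic_entry j r' -> r = r'.
Proof.
rewrite /magic_entry /rot_half /neg_double.
case: j => [|[|[|j]]] /=; last by case: odd => /=; lia.
all: try do 2 case: ifP; lia.
Qed.

Lemma sum_magic_entry k r : r < m ->
  \sum_(j < k.*2.+3) magic_entry j r = 3 * h + k * h.*2.
Proof.
move=> lt_r_m; elim: k => [|k IHk].
  rewrite !big_ord_recr big_ord0 /= /rot_half /neg_double.
  by case: (leqP r h); lia.
rewrite doubleS 2!big_ord_recr /= IHk odd_double /=; lia.
Qed.

Definition magic_label (j r : nat) : nat := (j * m).+1 + magic_entry j r.

Lemma magic_label_inj j j' r r' : r < m -> r' < m ->
  magic_label j r = magic_label j' r' -> j = j' /\ r = r'.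
Proof.
move=> lt_r_m lt_r'_m eq_lab.
have eq_j : j = j'.
  move: eq_lab (magic_entry_lt j lt_r_m) (magic_entry_lt j' lt_r'_m).
  rewrite /magic_label; nia.
split=> //; subst j'; apply: magic_entry_inj lt_r_m lt_r'_m _.
exact: addnI eq_lab.
Qed.

Lemma magic_label_le j r n : r < m -> j < n -> magic_label j r <= n * m.
Proof. by move=> /(magic_entry_lt j); rewrite /magic_label; nia. Qed.

Lemma sum_magic_label k r : r < m ->
  \sum_(j < k.*2.+3) magic_label j r = \sum_(j < k.*2.+3) magic_label j 0.
Proof. by move=> lt_r_m; rewrite !big_split /= !sum_magic_entry. Qed.

End MagicRectangle.

Lemma bij_label_magic (V : finType) (n h : nat) : #|V| = h.*2.+1 ->
  bij_label (fun p : V * 'I_n => magic_label h p.2 (enum_rank p.1)).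
Proof.
move=> cardV; have lt_rank (v : V) : enum_rank v < h.*2.+1.
  by rewrite -cardV ltn_ord.
split=> [[v j] [v' j'] /= eq_lab | [v j]].
  by have [/val_inj -> /val_inj/enum_rank_inj ->] :=
    magic_label_inj (lt_rank v) (lt_rank v') eq_lab.
rewrite card_prod card_ord /=.
by have := magic_label_le (lt_rank v) (ltn_ord j); rewrite -cardV mulnC => ->.
Qed.

Section Biregular.

Variables (V : finType) (e : rel V) (A B : {set V}).
Hypothesis coverAB : A :|: B = [set: V].
Hypothesis bipartiteAB : forall x y, e x y -> (x \in A) = (y \in B).
Hypothesis degA : {in A &, forall x y, deg e x = deg e y}.
Hypothesis degB : {in B &, forall x y, deg e x = deg e y}.

Lemma deg_edge_cases u v z : e u v -> deg e z = deg e u \/ deg e z = deg e v.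
Proof.
move=> /bipartiteAB uAvB.
have inAB w : (w \in A) || (w \in B) by rewrite -in_setU coverAB inE.
have notA_B w : w \notin A -> w \in B by move: (inAB w); case: (w \in A).
have notB_A w : w \notin B -> w \in A by rewrite -[w \in A]orbF; case: (w \in B) (inAB w).
case/orP: (inAB z) => zAB; case: (boolP (u \in A)) => uA.
- by left; apply: degA.
- by right; apply: degA => //; apply: notB_A; rewrite -uAvB.
- by right; apply: degB; rewrite // -uAvB.
- by left; apply: degB => //; apply: notA_B.
Qed.

Lemma deg_edge_neq u v : (exists x y, deg e x != deg e y) ->
  e u v -> deg e u != deg e v.
Proof.
move=> [x [y]] + uv; apply: contraNneq => eq_deg.
by case: (deg_edge_cases x uv) => ->; case: (deg_edge_cases y uv) => ->;
  rewrite ?eq_deg.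
Qed.

End Biregular.

Lemma lex_prod_edgeless (V : finType) (e : rel V) n p q :
  lex_prod e (@edgeless n) p q = e p.1 q.1.
Proof. by rewrite /lex_prod /edgeless andbF orbF. Qed.

Lemma weight_lex_edgeless (V : finType) (e : rel V) n (f : V * 'I_n -> nat) C :
  (forall u, \sum_(j < n) f (u, j) = C) ->
  forall p, weight (lex_prod e (@edgeless n)) f p = deg e p.1 * C.
Proof.
move=> fibre_sum [v i]; rewrite /weight /deg -sum_nat_const.
rewrite (eq_bigl (fun q => e v q.1 && true)) => [|q]; last first.
  by rewrite lex_prod_edgeless andbT.
have -> : \sum_(q | e v q.1 && true) f q = \sum_(u | e v u) \sum_(j < n) f (u, j).
  by rewrite pair_big_dep; apply: eq_bigr => -[].
by apply: eq_big => [u|u _]; rewrite ?inE ?fibre_sum.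
Qed.

Lemma num_weights_le (V : finType) (g : rel V) f (s : seq nat) :
  (forall v, weight g f v \in s) -> num_weights g f <= size s.
Proof.
move=> ws; apply: uniq_leq_size; first exact: undup_uniq.
by move=> w; rewrite mem_undup => /mapP [v _ ->].
Qed.

Lemma num_weights_edge (V : finType) (g : rel V) f x y :
  ld_antimagic g f -> g x y -> 1 < num_weights g f.
Proof.
move=> [_ antimagic] gxy.
apply: (@uniq_leq_size _ [:: weight g f x; weight g f y]).
  by rewrite /= inE antimagic.
by move=> w; rewrite !inE mem_undup => /orP [] /eqP ->; apply: map_f;
  rewrite mem_enum.
Qed.

Lemma chi_ld_eq2 (V : finType) (g : rel V) f x y a b :
  g x y -> ld_antimagic g f -> (forall v, weight g f v \in [:: a; b]) ->
  chi_ld_eq g 2.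
Proof.
move=> gxy f_ld f_ab; split=> [|f' f'_ld]; last exact: num_weights_edge gxy.
exists f; split=> //; apply/eqP; rewrite eqn_leq (num_weights_le f_ab).
exact: num_weights_edge gxy.
Qed.

Theorem mainTheorem18 (n m : nat) (V : finType) (e : rel V) (A B : {set V}) :
  3 <= n -> odd n -> 1 < m -> odd m ->
  simple_graph e -> no_isolated e -> #|V| = m ->
  (* {A, B} is a bipartition of V *)
  A :&: B = set0 -> A :|: B = [set: V] ->
  (forall x y, e x y -> (x \in A) = (y \in B)) ->
  (* all vertices of A have the same degree, likewise for B *)
  {in A &, forall x y, deg e x = deg e y} ->
  {in B &, forall x y, deg e x = deg e y} ->
  (* G is not regular *)
  (exists x y, deg e x != deg e y) ->
  chi_ld_eq (lex_prod e (@edgeless n)) 2.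
Proof.
move=> n_ge3 odd_n _ odd_m _ no_iso cardV _ coverAB bip degA degB nonreg.
have [k def_n] : exists k, n = k.*2.+3.
  by exists n./2.-1; move: n_ge3 (odd_double_half n); rewrite odd_n; lia.
have [h def_m] : exists h, m = h.*2.+1.
  by exists m./2; move: (odd_double_half m); rewrite odd_m; lia.
have [x0 _] := nonreg.
have [v0 e_x0v0] : exists v, e x0 v.
  by have := no_iso x0; rewrite /deg card_gt0 => /set0Pn [v]; rewrite inE; exists v.
set f := fun p : V * 'I_n => magic_label h p.2 (enum_rank p.1).
set C := \sum_(j < n) magic_label h j 0.
have wf : forall p, weight (lex_prod e (@edgeless n)) f p = deg e p.1 * C.
  apply: weight_lex_edgeless => u; rewrite /f /C def_n /=.
  by apply: sum_magic_label; rewrite -def_m -cardV ltn_ord.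
have C_gt0 : 0 < C by rewrite /C def_n big_ord_recl.
pose i0 : 'I_n := Ordinal (ltnW (ltnW n_ge3)).
apply: (@chi_ld_eq2 _ _ f (x0, i0) (v0, i0) (deg e x0 * C) (deg e v0 * C)).
- by rewrite lex_prod_edgeless.
- split; first by apply: bij_label_magic; rewrite cardV.
  move=> p q; rewrite lex_prod_edgeless !wf eqn_pmul2r //.
  exact: (deg_edge_neq coverAB bip degA degB nonreg).
- move=> p; rewrite wf !inE.
  by case: (deg_edge_cases coverAB bip degA degB p.1 e_x0v0) => ->; rewrite eqxx ?orbT.
Qed.
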